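(* If $R$ is an NJ-symmetric semiperiodic ring, then $R/J(R)$ is commutative.
   Context: Rings are associative with identity. $N(R)$ is the set of nilpotent elements, $J(R)$ the Jacobson radical, $Z(R)$ the center. $R$ is NJ-symmetric if for all $a,b,c\in R$, $abc\in N(R)$ implies $bac\in J(R)$. $R$ is semiperiodic if for each $a\in R\setminus (J(R)\cup Z(R))$ there exist positive integers $p,q$ of opposite parity with $a^q-a^p\in N(R)$. *)

From mathcomp Require Import all_boot all_algebra.
Set Implicit Arguments. Unset Strict Implicit. Unset Printing Implicit Defensive.
Import GRing.Theory.
Local Open Scope ring_scope.

(* Rings: associative with identity (possibly the zero ring, hence pzRingType). *)

Definition nilpotent_elt (R : pzRingType) (a : R) : Prop :=
  exists n : nat, a ^+ n = 0.

Definition central (R : pzRingType) (a : R) : Prop :=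
  forall x : R, a * x = x * a.

Definition left_ideal (R : pzRingType) (I : R -> Prop) : Prop :=
  [/\ I 0, (forall x y, I x -> I y -> I (x + y)), (forall x, I x -> I (- x))
    & (forall r x, I x -> I (r * x))].

Definition maximal_left_ideal (R : pzRingType) (M : R -> Prop) : Prop :=
  [/\ left_ideal M, ~ M 1 &
      forall I : R -> Prop, left_ideal I -> ~ I 1 ->
        (forall x, M x -> I x) -> forall x, I x -> M x].

Definition jacobson (R : pzRingType) (a : R) : Prop :=
  forall M : R -> Prop, maximal_left_ideal M -> M a.

Definition NJ_symmetric (R : pzRingType) : Prop :=
  forall a b c : R, nilpotent_elt (a * b * c) -> jacobson (b * a * c).

Definition semiperiodic (R : pzRingType) : Prop :=
  forall a : R, ~ jacobson a -> ~ central a ->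
    exists p q : nat, [/\ (0 < p)%N, (0 < q)%N, odd p != odd q
                        & nilpotent_elt (a ^+ q - a ^+ p)].

(* R/J(R) is commutative: (a+J)(b+J) = (b+J)(a+J) for all a b,
   i.e. ab - ba in J(R) *)
Definition quot_jacobson_commutative (R : pzRingType) : Prop :=
  forall a b : R, jacobson (a * b - b * a).

(* Fix a maximal left ideal M and let P = {x | x R is contained in M}, the largest
   two-sided ideal inside M. It contains J(R) and is prime, so it suffices to show that
   Q = R/P is commutative. NJ-symmetry kills the nilpotents of R in Q and forces every
   idempotent of R to become 0 or 1 in Q; with semiperiodicity this shows that every
   noncentral element of Q is zero or of odd multiplicative order, and that Q is a domain.
   Such a domain is commutative: a noncentral x of odd order forces characteristic 2,
   F = F_2[x] is a finite field and ad_x^|F| = ad_x, so ad_x has an eigenvector w with a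
   nonzero eigenvalue in F. Then w has finite order and normalizes F, so F[w] is a finite
   domain, hence commutative by Wedderburn's theorem, contradicting xw <> wx. *)

From HB Require Import structures.
From mathcomp Require Import all_boot all_algebra all_field boolp.
Set Implicit Arguments. Unset Strict Implicit. Unset Printing Implicit Defensive.
Import GRing.Theory.
Local Open Scope ring_scope.
Local Open Scope quotient_scope.

(** * Domains whose elements are central or of odd order *)

Definition ad (R : pzRingType) (u v : R) := u * v - v * u.

Lemma ad_is_zmod_morphism (R : pzRingType) (u : R) : zmod_morphism (ad u).
Proof. by move=> v w; rewrite /ad mulrBr mulrBl !opprB addrACA [- _ + _]addrC addrACA. Qed.
HB.instance Definition _ (R : pzRingType) (u : R) :=
  GRing.isZmodMorphism.Build R R (ad u) (ad_is_zmod_morphism u).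

Lemma ad_mull (R : pzRingType) (u c v : R) : GRing.comm u c -> ad u (c * v) = c * ad u v.
Proof. by move=> uc; rewrite /ad mulrBr !mulrA uc. Qed.

Section Char2.
Variables (R : nzRingType) (R2 : 2 \in [pchar R]).

Lemma ad_ad_pchar2 (u v : R) : ad u (ad u v) = ad (u ^+ 2) v.
Proof.
rewrite /ad !mulrBr !mulrBl !mulrA -expr2 -[v * u * u]mulrA -expr2.
rewrite !(oppr_pchar2 R2) -!addrA; congr (_ + _).
by rewrite addrA addrr_pchar2 // add0r.
Qed.

Lemma iter_ad_pchar2 (u v : R) k : iter (2 ^ k) (ad u) v = ad (u ^+ (2 ^ k)) v.
Proof.
elim: k v => [|k IHk] v; first by rewrite expr1.
by rewrite expnSr muln2 -addnn iterD !IHk ad_ad_pchar2 -exprM muln2 addnn.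
Qed.

End Char2.

Lemma pchar2_of_odd_orders (R : nzRingType) (x : R) m n :
  odd m -> odd n -> x ^+ m = 1 -> (- x) ^+ n = 1 -> 2 \in [pchar R].
Proof.
move=> m_odd n_odd xm xn; apply/andP; split=> //.
have : (- x) ^+ (m * n) = 1 by rewrite mulnC exprM xn expr1n.
rewrite exprNn [x ^+ _]exprM xm expr1n mulr1 -signr_odd oddM m_odd n_odd expr1.
by move/eqP; rewrite eq_sym -subr_eq0 opprK.
Qed.

Lemma twisted_comm_expr (R : pzRingType) (w x y : R) i :
  w * x = y * w -> w * x ^+ i = y ^+ i * w.
Proof.
move=> wx; elim: i => [|i IHi]; first by rewrite !expr0 mulr1 mul1r.
by rewrite exprS mulrA wx -mulrA IHi mulrA -exprS.
Qed.

Section SubsetSums.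
Variables (R : nzRingType) (R2 : 2 \in [pchar R]) (I : finType) (g : I -> R).
Hypotheses (g_one : exists i, g i = 1) (g_mul : forall i j, exists k, g i * g j = g k).

Definition subset_sums := [seq \sum_(i in A) g i | A : {set I}].

Lemma subset_sumsP z : reflect (exists A : {set I}, z = \sum_(i in A) g i) (z \in subset_sums).
Proof. by apply: (iffP imageP) => [[A _ ->]|[A ->]]; exists A. Qed.

Lemma subset_sumsD : {in subset_sums &, forall y z, y + z \in subset_sums}.
Proof.
move=> _ _ /subset_sumsP[A ->] /subset_sumsP[B ->]; apply/subset_sumsP.
exists [set i | (i \in A) (+) (i \in B)]; rewrite !(big_mkcond (fun i => i \in _)) -big_split.
apply: eq_bigr => i _; rewrite inE /=.
by case: (i \in A); case: (i \in B); rewrite ?addr0 ?add0r ?(addrr_pchar2 R2).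
Qed.

Lemma subset_sums_gen i : g i \in subset_sums.
Proof. by apply/subset_sumsP; exists [set i]; rewrite big_set1. Qed.

Lemma subset_sums_big (J : Type) (r : seq J) (P : pred J) (F : J -> R) :
  (forall j, F j \in subset_sums) -> \sum_(j <- r | P j) F j \in subset_sums.
Proof.
move=> Fs; apply: (big_ind [in subset_sums]) => //; last exact: subset_sumsD.
by apply/subset_sumsP; exists set0; rewrite big_set0.
Qed.

Lemma subset_sums_closed : subring_closed (mem subset_sums).
Proof.
have [i1 gi1] := g_one; split; first by rewrite -gi1 subset_sums_gen.
  by move=> y z ys zs; rewrite (oppr_pchar2 R2) subset_sumsD.
move=> _ _ /subset_sumsP[A ->] /subset_sumsP[B ->].
rewrite mulr_suml; apply: subset_sums_big => i; rewrite mulr_sumr.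
by apply: subset_sums_big => j; have [k ->] := g_mul i j; apply: subset_sums_gen.
Qed.

End SubsetSums.

Section FiniteSubring.
Variables (R : nzRingType) (s : seq R).
Hypotheses (s_closed : subring_closed (mem s)) (R_dom : GRing.integral_domain_axiom R).

(* The dummy arguments make the HB instances below canonical for each closure proof. *)
Definition fin_subring of subring_closed (mem s) & GRing.integral_domain_axiom R
  : predArgType := seq_sub s.
Local Notation S := (fin_subring s_closed R_dom).

HB.instance Definition _ := [isSub of S for @ssval _ s].
HB.instance Definition _ := Finite.on S.
HB.instance Definition _ := GRing.SubChoice_isSubNzRing.Build R _ S s_closed.
HB.instance Definition _ := FinRing.isNzRing.Build S.

Lemma fin_subring_domain : GRing.integral_domain_axiom S.
Proof.
move=> a b /(congr1 val); rewrite rmorphM rmorph0 => /R_dom.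
by rewrite -!(inj_eq val_inj) rmorph0.
Qed.

HB.instance Definition _ :=
  GRing.PzRing_hasCommutativeMul.Build S (finDomain_mulrC fin_subring_domain).
HB.instance Definition _ := GRing.ComUnitRing_isIntegral.Build S fin_subring_domain.
HB.instance Definition _ :=
  GRing.UnitRing_isField.Build S (finDomain_field fin_subring_domain).

Lemma fin_subring_comm x y : x \in s -> y \in s -> x * y = y * x.
Proof. by move=> xs ys; have := congr1 val (mulrC (SeqSub xs : S) (SeqSub ys)). Qed.

Lemma fin_subring_pchar p : p \in [pchar R] -> p \in [pchar S].
Proof.
case/andP=> p_pr /eqP p0; apply/andP; split=> //.
by apply/eqP/val_inj; rewrite (rmorph_nat val) p0 rmorph0.
Qed.

End FiniteSubring.

Section PolynomialOfOperator.
Variables (K R : nzRingType) (f : {rmorphism K -> R}) (T : {additive R -> R}).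
Hypothesis T_semilinear : forall c v, T (f c * v) = f c * T v.

Definition poly_op (p : {poly K}) v := \sum_(i < size p) f p`_i * iter i T v.

Lemma poly_op_widen n (p : {poly K}) v :
  (size p <= n)%N -> poly_op p v = \sum_(i < n) f p`_i * iter i T v.
Proof.
move=> le_pn; rewrite /poly_op (big_ord_widen n (fun i => f p`_i * iter i T v)) //.
rewrite big_mkcond; apply: eq_bigr => i _; case: ltnP => // le_pi.
by rewrite nth_default // rmorph0 mul0r.
Qed.

Lemma poly_opD p q v : poly_op (p + q) v = poly_op p v + poly_op q v.
Proof.
pose n := maxn (size p) (size q).
rewrite !(@poly_op_widen n) ?leq_maxl ?leq_maxr ?(leq_trans (size_polyD _ _)) //.
by rewrite -big_split; apply: eq_bigr => i _; rewrite coefD rmorphD mulrDl.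
Qed.

Lemma poly_opN p v : poly_op (- p) v = - poly_op p v.
Proof.
by rewrite /poly_op size_polyN -sumrN; apply: eq_bigr => i _; rewrite coefN rmorphN mulNr.
Qed.

Lemma poly_op1 v : poly_op 1 v = v.
Proof. by rewrite /poly_op size_poly1 big_ord1 coefC rmorph1 mul1r. Qed.

Lemma poly_op_mulC c p v : poly_op (c%:P * p) v = f c * poly_op p v.
Proof.
rewrite mul_polyC (@poly_op_widen (size p)) ?size_scale_leq // mulr_sumr.
by apply: eq_bigr => i _; rewrite coefZ rmorphM mulrA.
Qed.

Lemma poly_opC c v : poly_op c%:P v = f c * v.
Proof. by rewrite -[c%:P]mulr1 poly_op_mulC poly_op1. Qed.

Lemma poly_op_mulX p v : poly_op (p * 'X) v = poly_op p (T v).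
Proof.
rewrite (@poly_op_widen (size p).+1); last first.
  by rewrite (leq_trans (size_polyMleq _ _)) // size_polyX addn2.
rewrite big_ord_recl coefMX rmorph0 mul0r add0r.
by apply: eq_bigr => i _; rewrite coefMX iterSr.
Qed.

Lemma poly_op_comm p v : poly_op p (T v) = T (poly_op p v).
Proof.
rewrite /poly_op raddf_sum; apply: eq_bigr => i _.
by rewrite T_semilinear -iterSr.
Qed.

Lemma poly_opM p q v : poly_op (p * q) v = poly_op p (poly_op q v).
Proof.
elim/poly_ind: p v => [|p c IHp] v; first by rewrite mul0r /poly_op size_poly0 !big_ord0.
rewrite mulrDl -mulrA -(commr_polyX q) mulrA !poly_opD !poly_op_mulX IHp.
by rewrite (poly_op_comm q) poly_op_mulC poly_opC.
Qed.

Lemma poly_opXn n v : poly_op 'X^n v = iter n T v.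
Proof.
elim: n v => [|n IHn] v; first by rewrite expr0 poly_op1.
by rewrite exprSr poly_op_mulX IHn iterSr.
Qed.

Lemma poly_op_XsubC c v : poly_op ('X - c%:P) v = T v - f c * v.
Proof. by rewrite poly_opD poly_opN -['X]expr1 poly_opXn poly_opC. Qed.

Lemma split_annihilator_eigenvector (r : seq K) v : v != 0 ->
  poly_op (\prod_(l <- r) ('X - l%:P)) v = 0 ->
  exists2 l, l \in r & exists2 w, w != 0 & T w = f l * w.
Proof.
elim: r v => [|l r IHr] v v0.
  by rewrite big_nil poly_op1 => v_eq0; rewrite v_eq0 eqxx in v0.
rewrite big_cons poly_opM; set w := poly_op _ v => wl0.
have [w0|w0] := eqVneq w 0.
  by have [l' l'r eig] := IHr v v0 w0; exists l' => //; rewrite inE l'r orbT.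
exists l; first exact: mem_head.
by exists w => //; apply/eqP; rewrite -subr_eq0 -poly_op_XsubC wl0.
Qed.

End PolynomialOfOperator.

Lemma finField_eigenvector (K : finFieldType) (R : nzRingType)
    (f : {rmorphism K -> R}) (T : {additive R -> R}) :
  (forall c v, T (f c * v) = f c * T v) -> (forall v, iter #|K| T v = T v) ->
  forall y, T y != 0 -> exists2 l : K, l != 0 & exists2 w, w != 0 & T w = f l * w.
Proof.
move=> T_semilinear Tq y Ty0.
have := congr1 (fun p => poly_op f T p y) (finField_genPoly K).
rewrite /= poly_opD poly_opN poly_opXn -['X]expr1 poly_opXn Tq subrr.
rewrite (bigD1 0) //= subr0 mulrC poly_opM // -['X]expr1 poly_opXn -big_filter.
move/esym/(split_annihilator_eigenvector T_semilinear Ty0) => [l].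
by rewrite mem_filter => /andP[l0 _]; exists l.
Qed.

Section TorsionDomain.
Variable R : nzRingType.
Hypotheses (R_dom : GRing.integral_domain_axiom R)
  (R_tor : forall x : R, central x \/ exists2 m, odd m & x ^+ m = 1).

Section GeneratedSubfield.
Variables (x : R) (m : nat).
Hypotheses (R2 : 2 \in [pchar R]) (m_gt0 : (0 < m)%N) (xm : x ^+ m = 1).

Lemma powers_subring_closed : subring_closed (mem (subset_sums (fun i : 'I_m => x ^+ i))).
Proof.
apply: subset_sums_closed => //; first by exists (Ordinal m_gt0).
by move=> i j; exists (Ordinal (ltn_pmod (i + j) m_gt0)); rewrite /= expr_mod // exprD.
Qed.

Local Notation F := (fin_subring powers_subring_closed R_dom).

Lemma x_in_subfield : x \in subset_sums (fun i : 'I_m => x ^+ i).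
Proof.
have := subset_sums_gen (fun i : 'I_m => x ^+ i) (Ordinal (ltn_pmod 1 m_gt0)).
by rewrite /= expr_mod // expr1.
Qed.

Let xF : F := SeqSub x_in_subfield.

Lemma iter_ad_card v : iter #|F| (ad x) v = ad x v.
Proof.
have F2 := fin_subring_pchar powers_subring_closed R_dom R2.
have [k Fk] : exists k, #|F| = (2 ^ k)%N by exists (logn 2 #|F|); exact: card_pprimeChar F2.
have xF_card : x ^+ #|F| = x by have := congr1 val (expf_card xF); rewrite rmorphXn.
by rewrite Fk iter_ad_pchar2 // -Fk xF_card.
Qed.

Lemma ad_eigenvector y : ad x y != 0 ->
  exists2 l : F, l != 0 & exists2 w, w != 0 & ad x w = val l * w.
Proof.
apply: (@finField_eigenvector F R val (ad x) _ iter_ad_card) => c v.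
by apply/ad_mull/(fin_subring_comm powers_subring_closed R_dom x_in_subfield (ssvalP c)).
Qed.

Lemma twisted_subfield (w : R) (c : F) : w * x = val c * w ->
  forall d : F, exists d' : F, w * val d = val d' * w.
Proof.
move=> wx d; have /subset_sumsP[A ->] := valP d.
exists (\sum_(i in A) c ^+ i); rewrite rmorph_sum mulr_sumr mulr_suml.
by apply: eq_bigr => i _; rewrite rmorphXn (twisted_comm_expr _ wx).
Qed.

Lemma twisted_subfield_expr (w : R) (c : F) j : w * x = val c * w ->
  forall d : F, exists d' : F, w ^+ j * val d = val d' * w ^+ j.
Proof.
move=> wx; elim: j => [|j IHj] d; first by exists d; rewrite mulr1 mul1r.
have [d1 e1] := twisted_subfield wx d; have [d2 e2] := IHj d1.
by exists d2; rewrite exprSr -mulrA e1 mulrA e2 -mulrA -exprSr.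
Qed.

Lemma eigenvector_torsion_comm (w : R) n (l : F) : (0 < n)%N -> w ^+ n = 1 ->
  ad x w = val l * w -> x * w = w * x.
Proof.
move=> n_gt0 wn xw; have wx : w * x = val (xF - l) * w.
  by rewrite rmorphB /= mulrBl -xw /ad opprB addrC subrK.
(* Since w normalizes F, the products f * w ^+ j are closed under multiplication; their
   subset sums form a finite subring containing x and w. *)
pose g (u : F * 'I_n) := val u.1 * w ^+ u.2.
have g_one : exists u, g u = 1 by exists (1, Ordinal n_gt0); rewrite /g rmorph1 mul1r.
have g_mul u v : exists t, g u * g v = g t.
  have [d' e] := twisted_subfield_expr u.2 wx v.1.
  exists (u.1 * d', Ordinal (ltn_pmod (u.2 + v.2) n_gt0)).
  rewrite /g [(_, _).1]/= [(_, _).2]/= rmorphM expr_mod // exprD !mulrA.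
  by rewrite -(mulrA _ (w ^+ _)) e !mulrA.
have gx : g (xF, Ordinal n_gt0) = x by rewrite /g mulr1.
have gw : g (1, Ordinal (ltn_pmod 1 n_gt0)) = w.
  by rewrite /g rmorph1 mul1r /= expr_mod // expr1.
apply: (fin_subring_comm (subset_sums_closed R2 g_one g_mul) R_dom).
  by have := subset_sums_gen g (xF, Ordinal n_gt0); rewrite gx.
by have := subset_sums_gen g (1, Ordinal (ltn_pmod 1 n_gt0)); rewrite gw.
Qed.

End GeneratedSubfield.

Theorem torsion_domain_comm (x y : R) : x * y = y * x.
Proof.
apply: contrapT => xy; have adxy : ad x y != 0 by rewrite subr_eq0; apply/eqP.
have [xZ|[m m_odd xm]] := R_tor x; first exact: xy (xZ y).
have [nxZ|[m' m'_odd nxm]] := R_tor (- x).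
  by apply: xy; apply: oppr_inj; rewrite -mulNr nxZ mulrN.
have R2 := pchar2_of_odd_orders m_odd m'_odd xm nxm.
have [l l0 [w w0 xw]] := ad_eigenvector R2 (odd_gt0 m_odd) xm adxy.
have lw0 : val l * w != 0.
  apply/eqP => /R_dom/orP[/eqP l_eq0|/eqP w_eq0]; last by rewrite w_eq0 eqxx in w0.
  by move: l0; rewrite -(inj_eq val_inj) l_eq0 rmorph0 eqxx.
have [wZ|[n n_odd wn]] := R_tor w; first by move: lw0; rewrite -xw /ad wZ subrr eqxx.
by move: lw0; rewrite -xw /ad (eigenvector_torsion_comm (odd_gt0 n_odd) wn xw) subrr eqxx.
Qed.

End TorsionDomain.

(** * Quotient by a two-sided ideal *)

Definition proper_two_sided_ideal (R : pzRingType) (P : R -> Prop) :=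
  [/\ left_ideal P, (forall r x, P x -> P (x * r)) & ~ P 1].

Section QuotientRing.
Variables (R : pzRingType) (P : R -> Prop) (hP : proper_two_sided_ideal P).

Definition ideal_pred of proper_two_sided_ideal P : {pred R} := fun x => `[< P x >].
Local Notation I := (ideal_pred hP).

Lemma ideal_pred_zmod_closed : zmod_closed I.
Proof.
have [[P0 PD PN _] _ _] := hP.
by split=> [|x y /asboolP Px /asboolP Py]; apply/asboolP; [|apply/PD/PN].
Qed.
HB.instance Definition _ := GRing.isZmodClosed.Build R I ideal_pred_zmod_closed.

Definition quot_ring := {ideal_quot I}.
Local Notation Q := quot_ring.
HB.instance Definition _ := GRing.Zmodule.on Q.
HB.instance Definition _ : EqQuotient R (Quotient.equiv I) Q := EqQuotient.on Q.
HB.instance Definition _ := ZmodQuotient.on Q.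

Lemma pi_eq (x y : R) : \pi_Q x = \pi_Q y <-> P (x - y).
Proof.
split=> [/eqP|Pxy]; first by rewrite piE => /asboolP.
by apply/eqP; rewrite piE; apply/asboolP.
Qed.

Lemma pi_eq0 x : \pi_Q x = 0 <-> P x.
Proof. by have := pi_eq x 0; rewrite subr0 piE. Qed.

Definition quot_one : Q := lift_cst Q 1.
Definition quot_mul := lift_op2 Q *%R.
Canonical pi_one_morph := PiConst quot_one.

Lemma pi_mul : {morph \pi_Q : x y / x * y >-> quot_mul x y}.
Proof.
move=> x y; unlock quot_mul; apply/pi_eq.
have [[_ PD _ PL] PR _] := hP.
have repr_pi z : P (z - repr (\pi_Q z)) by apply/pi_eq; rewrite reprK.
set x' := repr _; set y' := repr _.
have -> : x * y - x' * y' = (x - x') * y + x' * (y - y').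
  by rewrite mulrBl mulrBr addrA subrK.
by apply: PD; [apply: PR | apply: PL]; apply: repr_pi.
Qed.
Canonical pi_mul_morph := PiMorph2 pi_mul.

Lemma quot_mulA : associative quot_mul.
Proof. by elim/quotW=> x; elim/quotW=> y; elim/quotW=> z; rewrite !piE mulrA. Qed.
Lemma quot_mul1r : left_id quot_one quot_mul.
Proof. by elim/quotW=> x; rewrite !piE mul1r. Qed.
Lemma quot_mulr1 : right_id quot_one quot_mul.
Proof. by elim/quotW=> x; rewrite !piE mulr1. Qed.
Lemma quot_mulDl : left_distributive quot_mul +%R.
Proof. by elim/quotW=> x; elim/quotW=> y; elim/quotW=> z; rewrite !piE mulrDl. Qed.
Lemma quot_mulDr : right_distributive quot_mul +%R.
Proof. by elim/quotW=> x; elim/quotW=> y; elim/quotW=> z; rewrite !piE mulrDr. Qed.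
Lemma quot_one_neq0 : quot_one != 0.
Proof. by apply/eqP; rewrite piE => /pi_eq0; case: hP. Qed.
HB.instance Definition _ := GRing.Zmodule_isNzRing.Build Q
  quot_mulA quot_mul1r quot_mulr1 quot_mulDl quot_mulDr quot_one_neq0.
HB.instance Definition _ := @isNzRingQuotient.Build
  R (Quotient.equiv I) 0 -%R +%R 1%R *%R Q (lock _) pi_mul.

Lemma pi1 : \pi_Q 1 = 1. Proof. by rewrite piE. Qed.
Lemma piB x y : \pi_Q (x - y) = \pi_Q x - \pi_Q y. Proof. by rewrite !piE. Qed.
Lemma piM x y : \pi_Q (x * y) = \pi_Q x * \pi_Q y. Proof. by rewrite piE. Qed.

Lemma piX x n : \pi_Q (x ^+ n) = \pi_Q x ^+ n.
Proof.
elim: n => [|n IHn]; first by rewrite !expr0 pi1.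
by rewrite !exprS piM IHn.
Qed.

End QuotientRing.

(** * Maximal left ideals and the Jacobson radical *)

Definition ideal_core (R : pzRingType) (M : R -> Prop) (x : R) := forall r, M (x * r).

Section MaximalLeftIdeal.
Variables (R : pzRingType) (M : R -> Prop).
Hypothesis maxM : maximal_left_ideal M.

Lemma maximal_left_ideal_comax y : ~ M y -> exists u m, M m /\ u * y + m = 1.
Proof.
move=> My; have [[M0 MD MN ML] M1 maxM'] := maxM.
pose I z := exists u m, M m /\ u * y + m = z.
apply: contrapT => I1; apply: My; apply: (maxM' I _ I1) => [|m Mm|].
- split; first by exists 0, 0; rewrite mul0r addr0.
  + move=> _ _ [u [m [Mm <-]]] [v [n [Mn <-]]].
    by exists (u + v), (m + n); rewrite mulrDl addrACA; split; first exact: MD.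
  + move=> _ [u [m [Mm <-]]]; exists (- u), (- m).
    by rewrite mulNr -opprD; split; first exact: MN.
  + move=> r _ [u [m [Mm <-]]]; exists (r * u), (r * m).
    by rewrite -mulrA -mulrDr; split; first exact: ML.
- by exists 0, m; rewrite mul0r add0r.
- by exists 1, 0; rewrite mul1r addr0.
Qed.

Lemma maximal_left_ideal_colon r : ~ M r -> maximal_left_ideal (fun y => M (y * r)).
Proof.
move=> Mr; have [[M0 MD MN ML] M1 _] := maxM; split; first split.
- by rewrite mul0r.
- by move=> x y Mx My; rewrite mulrDl; apply: MD.
- by move=> x Mx; rewrite mulNr; apply: MN.
- by move=> s x Mx; rewrite -mulrA; apply: ML.
- by rewrite mul1r.
move=> N [_ ND _ NL] N1 MsubN z Nz; apply: contrapT => Mzr.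
have [u [m [Mm e]]] := maximal_left_ideal_comax Mzr.
apply: N1; rewrite -(subrK (r * (u * z)) 1); apply: ND; last exact/NL/NL.
have me : m = 1 - u * (z * r) by rewrite -e addrAC subrr add0r.
apply: MsubN; suff -> : (1 - r * (u * z)) * r = r * m by exact: ML.
by rewrite me mulrBl mulrBr mul1r mulr1 !mulrA.
Qed.

Lemma jacobson_ideal_core x : jacobson x -> ideal_core M x.
Proof.
move=> Jx r; have [[_ _ _ ML] _ _] := maxM.
have [Mr|Mr] := EM (M r); first exact: ML.
exact: Jx _ (maximal_left_ideal_colon Mr).
Qed.

Lemma ideal_core_proper : proper_two_sided_ideal (ideal_core M).
Proof.
have [[M0 MD MN ML] M1 _] := maxM; split; first split.
- by move=> r; rewrite mul0r.
- by move=> x y Mx My r; rewrite mulrDl; apply: MD.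
- by move=> x Mx r; rewrite mulNr; apply: MN.
- by move=> s x Mx r; rewrite -mulrA; apply: ML.
- by move=> s x Mx r; rewrite -mulrA.
- by move=> M1r; apply: M1; rewrite -[1]mulr1.
Qed.

Lemma ideal_core_prime x y : (forall r, ideal_core M (x * r * y)) ->
  ideal_core M x \/ ideal_core M y.
Proof.
move=> Mxy; have [|My] := EM (ideal_core M y); [by right | left].
have [r0 Myr0] := (existsNP _).2 My.
have [u [m [Mm e]]] := maximal_left_ideal_comax Myr0.
have [[_ MD _ ML] _ _] := maxM.
move=> s; rewrite -[x * s]mulr1 -e mulrDr; apply: MD; last exact: ML.
by have := Mxy (s * u) r0; rewrite !mulrA.
Qed.

End MaximalLeftIdeal.

(** * NJ-symmetric semiperiodic rings *)

Lemma nilpotent_opp (R : pzRingType) (x : R) : nilpotent_elt x -> nilpotent_elt (- x).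
Proof. by case=> n xn; exists n; rewrite exprNn xn mulr0. Qed.

Lemma nilpotent_jacobson (R : pzRingType) : NJ_symmetric R ->
  forall x : R, nilpotent_elt x -> jacobson x.
Proof. by move=> NJ x; have := NJ 1 1 x; rewrite !mul1r. Qed.

Lemma expr_left_inverse (R : pzRingType) (u v : R) n : v * u = 1 -> v ^+ n * u ^+ n = 1.
Proof.
move=> vu; elim: n => [|n IHn]; first by rewrite !expr0 mulr1.
by rewrite exprSr exprS mulrA -(mulrA _ v) vu mulr1.
Qed.

Lemma expr_left_cancel (R : pzRingType) (u v : R) s d :
  v * u = 1 -> u ^+ s * (1 - u ^+ d) = 0 -> u ^+ d = 1.
Proof.
move=> vu; rewrite mulrBr mulr1 => /subr0_eq usd.
by rewrite -[u ^+ d]mul1r -{1}(expr_left_inverse s vu) -mulrA -usd expr_left_inverse.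
Qed.

Lemma one_sub_mul_expr (R : pzRingType) (a b : R) K : GRing.comm a b ->
  exists2 c, GRing.comm a c & (1 - a * b) ^+ K = 1 - a * c.
Proof.
move=> ab; elim: K => [|K [c ac e]]; first by exists 0; [exact: commr0 | rewrite mulr0 subr0].
exists (b + c - c * (a * b)).
  by apply: commrB; [exact: commrD | apply: commrM => //; exact/commrM/ab/commr_refl].
rewrite exprSr e [in LHS]mulrBl mul1r [in LHS]mulrBr mulr1 mulrBr mulrDr !mulrA.
by rewrite -addrA -opprD addrA.
Qed.

Lemma nilpotent_expr_sub (R : pzRingType) (a : R) p q : odd p != odd q ->
  nilpotent_elt (a ^+ q - a ^+ p) ->
  exists s d, odd d /\ nilpotent_elt (a ^+ s * (1 - a ^+ d)).
Proof.
move=> pq; wlog lt_pq : p q pq / (p < q)%N => [wlog_pq|nil_pq].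
  case: (ltngtP p q) => [lt_pq|lt_qp|eq_pq]; last by rewrite eq_pq eqxx in pq.
  - exact: wlog_pq.
  - by move/nilpotent_opp; rewrite opprB; apply: wlog_pq; rewrite // eq_sym.
exists p, (q - p)%N; split; first by rewrite (oddB (ltnW lt_pq)) addbC -negb_eqb.
have -> : a ^+ p * (1 - a ^+ (q - p)) = - (a ^+ q - a ^+ p).
  by rewrite mulrBr mulr1 -exprD (subnKC (ltnW lt_pq)) opprB.
exact: nilpotent_opp.
Qed.

Lemma nilpotent_expr_one_sub (R : pzRingType) (a : R) s d : (0 < d)%N ->
  nilpotent_elt (a ^+ s * (1 - a ^+ d)) ->
  exists N, exists2 c, GRing.comm a c & a ^+ N = a ^+ N * (a * c).
Proof.
move=> d_gt0 [K asdK].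
have [c ac e] := one_sub_mul_expr K (commrX d.-1 (commr_refl a)).
exists (s * K)%N, c => //; apply/subr0_eq.
rewrite -{1}[a ^+ _]mulr1 -mulrBr -e -exprS prednK // exprM -exprMn_comm //.
by apply: commrB; [exact: commr1 | apply/commrX/commr_sym/commrX/commr_refl].
Qed.

Section IdempotentOfPowers.
Variables (R : pzRingType) (a c : R) (N : nat).
Hypotheses (ac : GRing.comm a c) (aN : a ^+ N = a ^+ N * (a * c)).
Local Notation E := ((a * c) ^+ N).

Let a_ac : GRing.comm a (a * c). Proof. exact/commrM/ac/commr_refl. Qed.

Let aN_absorbs j : a ^+ N * (a * c) ^+ j = a ^+ N.
Proof. by elim: j => [|j IHj]; rewrite ?mulr1 // exprSr mulrA IHj -aN. Qed.

Lemma comm_idempotent_of_powers : GRing.comm a E.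
Proof. exact: commrX. Qed.

Lemma idempotent_of_powers : E * E = E.
Proof.
rewrite {2}exprMn_comm // mulrA (commrX N (commr_sym comm_idempotent_of_powers)).
by rewrite aN_absorbs exprMn_comm.
Qed.

Lemma mul_idempotent_of_powers : a * c * E = E.
Proof. by rewrite exprMn_comm // mulrA (commrX N (commr_sym a_ac)) -aN. Qed.

Lemma nilpotent_mul_one_sub_idempotent : nilpotent_elt (a * (1 - E)).
Proof.
exists N.+1; rewrite exprMn_comm; last exact/commrB/comm_idempotent_of_powers/commr1.
have idem_pow j : (1 - E) ^+ j.+1 = 1 - E.
  elim: j => [|j IHj]; first by rewrite expr1.
  by rewrite exprS IHj mulrBl mul1r mulrBr mulr1 idempotent_of_powers subrr subr0.
by rewrite idem_pow exprS -mulrA mulrBr mulr1 aN_absorbs subrr mulr0.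
Qed.

End IdempotentOfPowers.

Section PrimitiveQuotient.
Variables (R : pzRingType) (NJ : NJ_symmetric R) (SP : semiperiodic R).
Variables (M : R -> Prop) (maxM : maximal_left_ideal M).
Local Notation Q := (quot_ring (ideal_core_proper maxM)).

Lemma pi_jacobson x : jacobson x -> \pi_Q x = 0.
Proof. by move=> Jx; apply/pi_eq0/(jacobson_ideal_core maxM). Qed.

Lemma pi_nilpotent x : nilpotent_elt x -> \pi_Q x = 0.
Proof. by move/(nilpotent_jacobson NJ)/pi_jacobson. Qed.

Lemma quot_prime (X Y : Q) : (forall Z, X * Z * Y = 0) -> X = 0 \/ Y = 0.
Proof.
elim/quotW: X => x; elim/quotW: Y => y XY.
have XYr r : ideal_core M (x * r * y).
  by apply/(pi_eq0 (ideal_core_proper maxM)); rewrite !piM; apply: XY.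
by have [] := ideal_core_prime maxM XYr; [left | right]; apply/pi_eq0.
Qed.

Lemma quot_idempotent E : E * E = E -> \pi_Q E = 0 \/ \pi_Q E = 1.
Proof.
move=> EE; suff /quot_prime[/subr0_eq E1|E0] : forall Z, (1 - \pi_Q E) * Z * \pi_Q E = 0.
- by right; rewrite -E1.
- by left.
(* x (1 - E) E = 0 is nilpotent, so NJ-symmetry puts (1 - E) x E in J(R). *)
elim/quotW => x; rewrite -pi1 -piB -!piM; apply: pi_jacobson; apply: NJ.
by exists 1%N; rewrite expr1 -mulrA mulrBl mul1r EE subrr mulr0.
Qed.

Lemma quot_zero_or_unit a c N : GRing.comm a c -> a ^+ N = a ^+ N * (a * c) ->
  \pi_Q a = 0 \/ \pi_Q c * \pi_Q a = 1.
Proof.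
move=> ac aN; have [E0|E1] := quot_idempotent (idempotent_of_powers ac aN).
  left; have := pi_nilpotent (nilpotent_mul_one_sub_idempotent ac aN).
  by rewrite piM piB pi1 E0 subr0 mulr1.
right; have := congr1 \pi_Q (mul_idempotent_of_powers ac aN).
by rewrite !piM E1 mulr1 -piM ac piM.
Qed.

Lemma quot_central_or_odd_order (X : Q) : central X \/ exists2 d, odd d & X ^+ d = 1.
Proof.
elim/quotW: X => a.
have [Ja|Ja] := EM (jacobson a).
  by left; rewrite pi_jacobson // => Y; rewrite mul0r mulr0.
have [Za|Za] := EM (central a); first by left; elim/quotW => b; rewrite -!piM Za.
have [p [q [_ _ pq nil_pq]]] := SP Ja Za.
have [s [d [d_odd nil_sd]]] := nilpotent_expr_sub pq nil_pq.
have [N [c ac aN]] := nilpotent_expr_one_sub (odd_gt0 d_odd) nil_sd.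
have [a0|ca] := quot_zero_or_unit ac aN; first by left; rewrite a0 => Y; rewrite mul0r mulr0.
right; exists d => //; apply: (expr_left_cancel (s := s) ca).
by have := pi_nilpotent nil_sd; rewrite piM piB pi1 !piX.
Qed.

Lemma quot_domain : GRing.integral_domain_axiom Q.
Proof.
move=> X Y XY; have [XZ|[d d_odd Xd]] := quot_central_or_odd_order X.
  have XZY Z : X * Z * Y = 0 by rewrite XZ -mulrA XY mulr0.
  by have [->|->] := quot_prime XZY; rewrite eqxx ?orbT.
apply/orP; right; apply/eqP.
by rewrite -[Y]mul1r -Xd -(prednK (odd_gt0 d_odd)) exprSr -mulrA XY mulr0.
Qed.

End PrimitiveQuotient.

Theorem corollary2p17 (R : pzRingType) :
  NJ_symmetric R -> semiperiodic R -> quot_jacobson_commutative R.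
Proof.
move=> NJ SP a b M maxM.
have := torsion_domain_comm (@quot_domain _ NJ SP _ maxM)
  (@quot_central_or_odd_order _ NJ SP _ maxM).
move/(_ (\pi a) (\pi b)); rewrite -!piM => /pi_eq /(_ 1).
by rewrite mulr1.
Qed.
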